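(* For all Borel probability measures $\mu,\nu$ on $\mathbb{R}$, $$d_{Ku}(\mu,\nu)=\max\{|\mu(I)-\nu(I)| : I\in\mathcal{I}_0\},$$ i.e. the maximum is attained.
   Context: $\mathcal{I}_0$ denotes the set of all non-empty connected subsets of $\mathbb{R}$ (intervals, possibly degenerate single points, possibly unbounded). With $f_\mu(t)=\mu((-\infty,t])$, the Kuiper distance is $d_{Ku}(\mu,\nu)=\sup_{t}(f_\mu(t)-f_\nu(t))+\sup_t(f_\nu(t)-f_\mu(t))$, which equals $\sup\{|\mu(I)-\nu(I)|: I \text{ a non-degenerate interval of }\mathbb{R}\}$. *)

From HB Require Import structures.
From mathcomp Require Import all_boot all_order all_algebra.
From mathcomp Require Import all_classical all_reals all_analysis.
Set Implicit Arguments. Unset Strict Implicit. Unset Printing Implicit Defensive.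
Import Order.TTheory GRing.Theory Num.Theory numFieldNormedType.Exports.
Local Open Scope classical_set_scope.
Local Open Scope ring_scope.

Definition cdf (R : realType) (mu : probability R R) (t : R) : R :=
  fine (mu [set` `]-oo, t]]).

Definition kuiper_dist (R : realType) (mu nu : probability R R) : R :=
  sup (range (fun t => cdf mu t - cdf nu t))
  + sup (range (fun t => cdf nu t - cdf mu t)).

Definition I0 (R : realType) (I : set R) : Prop := I !=set0 /\ connected I.

(* For a probability mu on R, let F_mu(b) = mu((-oo, b)) where the cut b is
   t- (open end), t+ (closed end) or +-oo; every interval with end cuts b <= c
   has measure F_mu(c) - F_mu(b).  The difference h = F_mu - F_nu restricted to
   the cuts t+ is f_mu - f_nu: it is right-continuous, has left limits h(t-)
   and vanishes at +-oo.  Such a function attains its supremum A over all cuts: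
   otherwise the set of t left of which h stays below A - e for some e > 0
   would contain a point beyond its own supremum.  Likewise -h attains its
   supremum B, and the interval between the two maximizing cuts realizes
   A + B = d_Ku, while |h(c) - h(b)| <= A + B for every pair of cuts. *)
From Pilot Require Import Defs.
From HB Require Import structures.
From mathcomp Require Import all_boot all_order all_algebra.
From mathcomp Require Import all_classical all_reals all_analysis.
From mathcomp Require Import lra.
Import Order.TTheory GRing.Theory Num.Theory numFieldNormedType.Exports.
Local Open Scope classical_set_scope.
Local Open Scope ring_scope.

Lemma near_at_left_right (R : realFieldType) (s : R) (P : R -> Prop) :
  (\forall u \near s^'-, P u) -> P s -> (\forall u \near s^'+, P u) ->
  \forall u \near s, P u.
Proof.
rewrite !near_withinE => Pl Ps Pr; apply: filter_app Pl; apply: filter_app Pr.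
by near=> u => Pr Pl; case: (ltgtP u s) => [/Pl|/Pr|->].
Unshelve. all: by end_near. Qed.

Section sup_of_cadlag.
Context {R : realType} {f g : R -> R}.
Hypotheses (f_ub : has_ubound (range f))
  (f_Ny0 : f x @[x --> -oo] --> 0) (f_y0 : f x @[x --> +oo] --> 0)
  (f_rc : forall s, f x @[x --> s^'+] --> f s)
  (f_ll : forall s, f x @[x --> s^'-] --> g s).

Let M := sup (range f).

Let f_le_sup t : f t <= M.
Proof. by apply: ub_le_sup => //; exists t. Qed.

Lemma sup_cadlag_ge0 : 0 <= M.
Proof.
rewrite leNgt; apply/negP => M_lt0.
have [N [_ f_gt_M]] := cvgr_gt 0 f_Ny0 _ M_lt0.
by have := f_gt_M (N - 1); rewrite ltrBlDr ltrDl ltr01 ltNge f_le_sup => /(_ isT).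
Qed.

Lemma left_limit_le_sup s : g s <= M.
Proof.
rewrite leNgt; apply/negP => M_lt_g.
have [u] := filter_ex (@cvgr_gt _ _ s^'- _ _ _ (f_ll s) _ M_lt_g).
by rewrite ltNge f_le_sup.
Qed.

Let below_sup t := exists2 c, c < M & forall u, u < t -> f u <= c.

Let below_sup_nonempty : 0 < M -> below_sup !=set0.
Proof.
move=> M_gt0; have [N [_ f_lt]] := cvgr_lt 0 f_Ny0 _ (divr_gt0 M_gt0 (ltr0Sn _ 1)).
by exists N, (M / 2) => [|u /f_lt /ltW]; first lra.
Qed.

Let below_sup_ub : 0 < M -> has_ubound below_sup.
Proof.
move=> M_gt0; have [N [_ f_lt]] := cvgr_lt 0 f_y0 _ (divr_gt0 M_gt0 (ltr0Sn _ 1)).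
exists N => t [c cM f_le_c]; rewrite leNgt; apply/negP => Nt.
suff : M <= Num.max c (M / 2) by rewrite le_max leNgt cM /= => ?; lra.
apply: ge_sup; first by exists (f 0), 0.
move=> _ [u _ <-]; rewrite le_max; case: (ltP u t) => [/f_le_c -> //|tu].
by rewrite (ltW (f_lt _ (lt_le_trans Nt tu))) orbT.
Qed.

Let below_sup_extend s : f s < M -> g s < M -> exists2 eta, 0 < eta &
  forall p, below_sup p -> s - eta < p -> below_sup (s + eta / 2).
Proof.
move=> fs_lt gs_lt; pose c := (Num.max (f s) (g s) + M) / 2.
have [fs_c gs_c cM] : [/\ f s < c, g s < c & c < M].
  have fs_m : f s <= Num.max (f s) (g s) by rewrite le_max lexx.
  have gs_m : g s <= Num.max (f s) (g s) by rewrite le_max lexx orbT.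
  have m_M : Num.max (f s) (g s) < M by rewrite gt_max fs_lt gs_lt.
  by rewrite /c; split; lra.
have : \forall u \near s, f u < c.
  apply: near_at_left_right => //; first exact: cvgr_lt _ (f_ll s) _ gs_c.
  exact: cvgr_lt _ (f_rc s) _ fs_c.
move=> /nbhs_ballP[eta /= eta_gt0 f_lt_c]; exists eta => //.
move=> p [c' c'M f_le_c'] s_eta_p.
exists (Num.max c c'); first by rewrite gt_max cM c'M.
move=> u u_lt; rewrite le_max.
case: (ltP u p) => [/f_le_c' ->|pu]; first by rewrite orbT.
have u_near_s : ball s eta u.
  by rewrite -ball_normE /ball_ /= ltr_distlC; apply/andP; split; lra.
by rewrite ltW // f_lt_c.
Qed.

Lemma sup_cadlag_attained : M = 0 \/ exists s, f s = M \/ g s = M.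
Proof.
have [|M_neq0] := eqVneq M 0; [by left | right].
have M_gt0 : 0 < M by rewrite lt_def M_neq0 sup_cadlag_ge0.
have below_sup_sup : has_sup below_sup.
  by split; [exact: below_sup_nonempty | exact: below_sup_ub].
set s := sup below_sup.
have [fs_ge|fs_lt] := leP M (f s).
  by exists s; left; apply/eqP; rewrite eq_le f_le_sup.
have [gs_ge|gs_lt] := leP M (g s).
  by exists s; right; apply/eqP; rewrite eq_le left_limit_le_sup.
have [eta eta_gt0 extend] := below_sup_extend _ fs_lt gs_lt.
have [p below_p s_eta_p] : exists2 p, below_sup p & s - eta < p.
  by apply: sup_gt; [exact: below_sup_nonempty | rewrite ltrBlDr ltrDl].
have := ub_le_sup (below_sup_ub M_gt0) (extend p below_p s_eta_p).
by rewrite -/s; lra.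
Qed.

End sup_of_cadlag.

Lemma itvNyoEbigcup (R : realType) (t : R) :
  `]-oo, t[%classic = \bigcup_n `]-oo, t - n.+1%:R^-1]%classic.
Proof.
apply/seteqP; split => x /=.
- rewrite in_itv /= => /ltr_add_invr[n xn].
  by exists n => //=; rewrite in_itv /= lerBrDr ltW.
- move=> [n _] /=; rewrite !in_itv /= => /le_lt_trans; apply.
  by rewrite ltrBlDr ltrDl.
Qed.

Definition mass_below {R : realType} (mu : probability R R) (b : itv_bound R) : R :=
  fine (mu [set` Interval -oo%O b]).

Section mass_below.
Context {R : realType} (mu : probability R R).

(* The library states the cdf limits for random variables; the identity of R
   has law mu. *)
Let idR : R -> R := idfun.
#[local] HB.instance Definition _ :=
  @isMeasurableFun.Build _ _ _ _ idR (@measurable_id _ _ setT).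

Let cdfE t : (Defs.cdf mu t)%:E = random_variable.cdf (idR : {RV mu >-> R}) t.
Proof. by rewrite fineK ?fin_num_measure. Qed.

Lemma mass_belowE b : (mass_below mu b)%:E = mu [set` Interval -oo%O b].
Proof. by rewrite fineK ?fin_num_measure. Qed.

Lemma mass_below_BRight t : mass_below mu (BRight t) = Defs.cdf mu t.
Proof. by []. Qed.

Lemma mass_belowNy : mass_below mu -oo%O = 0.
Proof. by rewrite /mass_below set_itv_bndNy measure0. Qed.

Lemma mass_belowy : mass_below mu +oo%O = 1.
Proof. by rewrite /mass_below set_itvNyy probability_setT. Qed.

Lemma mass_below_ge0 b : 0 <= mass_below mu b.
Proof. exact: fine_ge0. Qed.

Lemma mass_below_le1 b : mass_below mu b <= 1.
Proof. by rewrite -lee_fin mass_belowE probability_le1. Qed.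

Lemma mass_below_le b c : (b <= c)%O -> mass_below mu b <= mass_below mu c.
Proof.
move=> bc; rewrite -lee_fin !mass_belowE le_measure ?inE //.
by move=> x /=; apply: subitvPr.
Qed.

Lemma measure_itv_mass_below b c : (b <= c)%O ->
  fine (mu [set` Interval b c]) = mass_below mu c - mass_below mu b.
Proof.
move=> bc; have -> : [set` Interval b c] =
    [set` Interval -oo%O c] `\` [set` Interval -oo%O b].
  apply/seteqP; split => x /=; rewrite !itv_boundlr /=.
    move=> /andP[bx xc]; split => // xb.
    by have := le_trans xb bx; rewrite bnd_simp ltxx.
  by case=> xc /negP; rewrite -ltNge ltBRight_leBLeft => bx; apply/andP.
rewrite measureD //; last by rewrite (le_lt_trans (probability_le1 _ _)) ?ltry.
rewrite setIidr; first by rewrite fineB ?fin_num_measure.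
by move=> x /=; apply: subitvPr.
Qed.

Lemma cdf_cvgNy0 : Defs.cdf mu t @[t --> -oo] --> 0.
Proof. exact: (fine_cvg (cvg_cdfNy0 (idR : {RV mu >-> R}))). Qed.

Lemma cdf_cvgy1 : Defs.cdf mu t @[t --> +oo] --> (1 : R).
Proof. exact: (fine_cvg (cvg_cdfy1 (idR : {RV mu >-> R}))). Qed.

Lemma cdf_cvg_right s : Defs.cdf mu t @[t --> s^'+] --> Defs.cdf mu s.
Proof. by apply: fine_cvg; rewrite cdfE; exact: cdf_right_continuous. Qed.

Lemma cdf_cvg_left s : Defs.cdf mu t @[t --> s^'-] --> mass_below mu (BLeft s).
Proof.
have mass_cvg :
    Defs.cdf mu (s - n.+1%:R^-1) @[n --> \oo] --> mass_below mu (BLeft s).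
  apply: fine_cvg; rewrite mass_belowE -[X in _ --> mu X]/(`]-oo, s[%classic).
  rewrite itvNyoEbigcup; apply: nondecreasing_cvg_mu => //.
    exact: bigcup_measurable.
  move=> m n mn; apply/subsetPset => x /=; rewrite !in_itv /= => /le_trans; apply.
  by rewrite lerD2l lerN2 lef_pV2 ?posrE // ler_nat.
apply/cvgrPdist_lt => e e_gt0.
have /cvgrPdist_lt/(_ e e_gt0)/filter_ex[k k_close] := mass_cvg.
near=> t.
have t_lt : t < s by near: t; exact: nbhs_left_lt.
have k_lt : s - k.+1%:R^-1 < t.
  by near: t; apply: nbhs_left_gt; rewrite ltrBlDr ltrDl.
have := mass_below_le (BRight (s - k.+1%:R^-1)) (BRight t).
rewrite bnd_simp => /(_ (ltW k_lt)).
have := mass_below_le (BRight t) (BLeft s); rewrite bnd_simp => /(_ t_lt).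
move: k_close; rewrite !mass_below_BRight !ltr_norml => /andP[? ?] ? ?.
by apply/andP; split; lra.
Unshelve. all: by end_near. Qed.

End mass_below.

Definition mass_below_diff {R : realType} (mu nu : probability R R)
  (b : itv_bound R) : R := mass_below mu b - mass_below nu b.

Section mass_below_diff.
Context {R : realType} (mu nu : probability R R).

Let D t := Defs.cdf mu t - Defs.cdf nu t.

Let D_ub : has_ubound (range D).
Proof.
exists 1 => _ [t _ <-]; rewrite /D -!mass_below_BRight.
by have := mass_below_le1 mu (BRight t); have := mass_below_ge0 nu (BRight t); lra.
Qed.

Let D_cvgNy0 : D t @[t --> -oo] --> 0.
Proof. by rewrite -(subr0 0); apply: cvgB; exact: cdf_cvgNy0. Qed.

Let D_cvgy0 : D t @[t --> +oo] --> 0.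
Proof. by rewrite -(subrr (1 : R)); apply: cvgB; exact: cdf_cvgy1. Qed.

Let D_cvg_right s : D t @[t --> s^'+] --> D s.
Proof. by apply: cvgB; exact: cdf_cvg_right. Qed.

Let D_cvg_left s : D t @[t --> s^'-] --> mass_below_diff mu nu (BLeft s).
Proof. by apply: cvgB; exact: cdf_cvg_left. Qed.

Lemma mass_below_diff_le_sup b : mass_below_diff mu nu b <= sup (range D).
Proof.
have sup_ge0 := sup_cadlag_ge0 D_ub D_cvgNy0.
case: b => [[] s|[]].
- exact: (left_limit_le_sup D_ub D_cvg_left).
- by apply: ub_le_sup => //; exists s.
- by rewrite /mass_below_diff !mass_belowNy subrr.
- by rewrite /mass_below_diff !mass_belowy subrr.
Qed.

Lemma mass_below_diff_sup_attained :
  exists b, mass_below_diff mu nu b = sup (range D).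
Proof.
have [->|[s [<-|<-]]] :=
  sup_cadlag_attained D_ub D_cvgNy0 D_cvgy0 D_cvg_right D_cvg_left.
- by exists -oo%O; rewrite /mass_below_diff !mass_belowNy subrr.
- by exists (BRight s).
- by exists (BLeft s).
Qed.

End mass_below_diff.

Lemma mass_below_diffC {R : realType} (mu nu : probability R R) b :
  mass_below_diff nu mu b = - mass_below_diff mu nu b.
Proof. by rewrite /mass_below_diff opprB. Qed.

Lemma measure_diff_itv {R : realType} (mu nu : probability R R) (b c : itv_bound R) :
  (b <= c)%O -> fine (mu [set` Interval b c]) - fine (nu [set` Interval b c]) =
  mass_below_diff mu nu c - mass_below_diff mu nu b.
Proof. by move=> bc; rewrite !measure_itv_mass_below // /mass_below_diff; lra. Qed.

Lemma I0_itv_bnd {R : realType} (I : set R) :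
  I0 I -> exists b c, (b <= c)%O /\ I = [set` Interval b c].
Proof.
move=> [I_ne /connected_intervalP /is_intervalP I_hull].
move: I_ne; rewrite I_hull; case: (Rhull I) => b c [x /= x_bc].
exists b, c; split => //; rewrite leNgt; apply/negP => cb.
by move: x_bc; rewrite itv_ge // -leNgt ltW.
Qed.

Lemma itv_I0_witness {R : realType} (mu nu : probability R R) (i : interval R) :
  exists2 I, I0 I &
    fine (mu I) - fine (nu I) = fine (mu [set` i]) - fine (nu [set` i]).
Proof.
have [i_ne|i_empty] := pselect ([set` i] !=set0).
  exists [set` i] => //.
  by split => //; apply/connected_intervalP/interval_is_interval.
have -> : [set` i] = set0.
  by apply/seteqP; split => [x ix|//]; apply: i_empty; exists x.
exists setT; last by rewrite !probability_setT !measure0 !subrr.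
by split; [exists 0 | apply/connected_intervalP].
Qed.

Theorem lemma2p1 (R : realType) (mu nu : probability R R) :
  (exists2 I : set R, I0 I & `|fine (mu I) - fine (nu I)| = kuiper_dist mu nu)
  /\ (forall I : set R, I0 I -> `|fine (mu I) - fine (nu I)| <= kuiper_dist mu nu).
Proof.
rewrite /kuiper_dist.
set A := sup (range (fun t => Defs.cdf mu t - Defs.cdf nu t)).
set B := sup (range (fun t => Defs.cdf nu t - Defs.cdf mu t)).
have le_A b : mass_below_diff mu nu b <= A by exact: mass_below_diff_le_sup.
have le_B b : - mass_below_diff mu nu b <= B.
  by rewrite -mass_below_diffC; exact: mass_below_diff_le_sup.
split; last first.
  move=> I /I0_itv_bnd[b [c [bc ->]]]; rewrite measure_diff_itv // ler_norml.
  have := le_A b; have := le_A c; have := le_B b; have := le_B c.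
  by move=> *; apply/andP; split; lra.
have [b1 b1A] : exists b, mass_below_diff mu nu b = A.
  exact: mass_below_diff_sup_attained.
have [b2 b2B] : exists b, - mass_below_diff mu nu b = B.
  have [b b_eq] := mass_below_diff_sup_attained nu mu.
  by exists b; rewrite -mass_below_diffC.
have [b21|b12] := leP b2 b1.
  have [I I0I I_diff] := itv_I0_witness mu nu (Interval b2 b1).
  by exists I => //; rewrite I_diff measure_diff_itv // ger0_norm;
    have := le_A b2; lra.
have [I I0I I_diff] := itv_I0_witness mu nu (Interval b1 b2).
by exists I => //; rewrite I_diff measure_diff_itv ?ltW // ler0_norm;
  have := le_B b1; lra.
Qed.
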